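(* For all integers $m\ge 2$, $n\ge 2$, the state complexity of $L(M)^R\cap L(N)$, where $M$ ranges over complete DFAs with $m$ states and $N$ over complete DFAs with $n$ states (over a common alphabet), is exactly $2^m\cdot n-n+1$: for every such $M,N$ some DFA with at most $2^m\cdot n-n+1$ states accepts $L(M)^R\cap L(N)$, and there exist such $M,N$ for which the minimal complete DFA of $L(M)^R\cap L(N)$ has exactly $2^m\cdot n-n+1$ states.
   Context: DFAs are complete deterministic finite automata; $L(M)$ is the accepted language; $L^R=\{w^R: w\in L\}$ is the reversal of $L$. The state complexity of a regular language is the number of states of its minimal complete DFA; the state complexity of an operation is the maximum state complexity of its result over all argument DFAs of the given sizes. *)

From mathcomp Require Import all_boot.
Set Implicit Arguments. Unset Strict Implicit. Unset Printing Implicit Defensive.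

Record dfa (A : finType) (n : nat) := DFA {
  dfa_start : 'I_n;
  dfa_final : {set 'I_n};
  dfa_trans : 'I_n -> A -> 'I_n
}.

Definition lang (A : finType) := seq A -> bool.

Definition dfa_run (A : finType) n (M : dfa A n) (q : 'I_n) (w : seq A) : 'I_n :=
  foldl (dfa_trans M) q w.

Definition dfa_accepts (A : finType) n (M : dfa A n) (w : seq A) : bool :=
  dfa_run M (dfa_start M) w \in dfa_final M.

Definition dfa_lang (A : finType) n (M : dfa A n) : lang A := fun w => dfa_accepts M w.

Definition lang_rev (A : finType) (L : lang A) : lang A := fun w => L (rev w).

Definition lang_inter (A : finType) (L1 L2 : lang A) : lang A := fun w => L1 w && L2 w.

Definition recognizes (A : finType) n (D : dfa A n) (L : lang A) : Prop :=
  forall w, dfa_accepts D w = L w.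

Definition state_complexity_is (A : finType) (L : lang A) (k : nat) : Prop :=
  (exists D : dfa A k, recognizes D L) /\
  (forall k' (D : dfa A k'), recognizes D L -> k <= k').

(* After reading w, a DFA for L(M)^R ∩ L(N) only has to remember the set S_w of
   states of M from which w^R is accepted, together with the state of N reached
   on w.  Since S_(wa) is the preimage of S_w under the letter a, this is a
   deterministic construction, and all pairs with S_w empty are rejecting sinks
   that can be merged: (2^m - 1) n + 1 states.  For the lower bound take as
   alphabet all pairs of transformations of the two state sets: every such state
   is then reached by a one-letter word, and any two of them are separated by a
   one-letter suffix. *)

From mathcomp Require Import all_boot.
Set Implicit Arguments. Unset Strict Implicit. Unset Printing Implicit Defensive.

Lemma card_set (T : finType) : #|{set T}| = 2 ^ #|T|.
Proof. by rewrite -(cardsT {set T}) -powersetT card_powerset cardsT. Qed.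

Lemma card_nonempty_sets (T : finType) :
  #|[pred X : {set T} | X != set0]| = 2 ^ #|T| - 1.
Proof.
rewrite -card_set subn1 -(cardC1 (set0 : {set T})).
by apply: eq_card => X; rewrite !inE.
Qed.

Definition dfa_of (A T : finType) (s : T) (f : pred T) (t : T -> A -> T) : dfa A #|T| :=
  DFA (enum_rank s) [set i | f (enum_val i)] (fun i a => enum_rank (t (enum_val i) a)).

Lemma dfa_of_run (A T : finType) (s : T) (f : pred T) (t : T -> A -> T) (x : T) w :
  dfa_run (dfa_of s f t) (enum_rank x) w = enum_rank (foldl t x w).
Proof. by elim: w x => [|a w IHw] x //=; rewrite /dfa_run /= enum_rankK -IHw. Qed.

Lemma dfa_of_accepts (A T : finType) (s : T) (f : pred T) (t : T -> A -> T) w :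
  dfa_accepts (dfa_of s f t) w = f (foldl t s w).
Proof. by rewrite /dfa_accepts dfa_of_run inE enum_rankK. Qed.

Lemma dfa_run_rcons (A : finType) n (M : dfa A n) q w a :
  dfa_run M q (rcons w a) = dfa_trans M (dfa_run M q w) a.
Proof. exact: foldl_rcons. Qed.

Lemma recognizes_card_ge (A T : finType) (L : lang A) (word : T -> seq A) k (D : dfa A k) :
  (forall t1 t2, (forall v, L (word t1 ++ v) = L (word t2 ++ v)) -> t1 = t2) ->
  recognizes D L -> #|T| <= k.
Proof.
move=> word_dist DL.
pose state t := dfa_run D (dfa_start D) (word t).
have state_inj : injective state.
  move=> t1 t2 eq_state; apply: word_dist => v.
  move: eq_state; rewrite /state /dfa_run => eq_state.
  by rewrite -!DL /dfa_accepts /dfa_run !foldl_cat eq_state.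
by rewrite -(card_ord k); apply: leq_card state_inj.
Qed.

Section ReversalIntersection.
Variables (A : finType) (m n : nat) (M : dfa A m) (N : dfa A n).

Definition revI_state : finType :=
  option ({X : {set 'I_m} | X != set0} * 'I_n)%type.

Lemma card_revI_state : #|revI_state| = 2 ^ m * n - n + 1.
Proof.
rewrite card_option card_prod card_sig card_nonempty_sets !card_ord.
by rewrite mulnBl mul1n addn1.
Qed.

(* [None] is the merged sink of all pairs whose first component is empty. *)
Definition revI_pack (X : {set 'I_m}) (p : 'I_n) : revI_state :=
  omap (fun X' => (X', p)) (insub X).

Definition revI_trans (x : revI_state) (a : A) : revI_state :=
  if x is Some (X, p) then revI_pack [set q | dfa_trans M q a \in val X] (dfa_trans N p a)
  else None.

Definition revI_start : revI_state := revI_pack (dfa_final M) (dfa_start N).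

Definition revI_final (x : revI_state) : bool :=
  if x is Some (X, p) then (dfa_start M \in val X) && (p \in dfa_final N) else false.

Definition rev_accepting_states (w : seq A) : {set 'I_m} :=
  [set q | dfa_run M q (rev w) \in dfa_final M].

Lemma revI_run w :
  foldl revI_trans revI_start w =
  revI_pack (rev_accepting_states w) (dfa_run N (dfa_start N) w).
Proof.
elim/last_ind: w => [|w a IHw].
  by congr revI_pack; apply/setP => q; rewrite inE.
rewrite foldl_rcons IHw dfa_run_rcons.
have -> : rev_accepting_states (rcons w a) =
          [set q | dfa_trans M q a \in rev_accepting_states w].
  by apply/setP => q; rewrite !inE rev_rcons.
rewrite /revI_pack; case: insubP => [X _ <- //|].
move/negbNE/eqP ->; rewrite insubF //=.
by apply/eqP/setP => q; rewrite !inE.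
Qed.

Definition revI_dfa := dfa_of revI_start revI_final revI_trans.

Lemma revI_dfa_recognizes :
  recognizes revI_dfa (lang_inter (lang_rev (dfa_lang M)) (dfa_lang N)).
Proof.
move=> w; rewrite dfa_of_accepts revI_run /revI_pack.
case: insubP => [X _ eqX|] /=; first by rewrite eqX inE.
move/negbNE/eqP/setP/(_ (dfa_start M)); rewrite !inE.
by rewrite /lang_inter /lang_rev /dfa_lang /dfa_accepts => ->.
Qed.

End ReversalIntersection.

Section Witness.
Variables (m n : nat).

Definition witness_letter : finType :=
  ({ffun 'I_m.+2 -> 'I_m.+2} * {ffun 'I_n.+2 -> 'I_n.+2})%type.

Definition witness_M : dfa witness_letter m.+2 :=
  DFA ord0 [set ord0] (fun q (a : witness_letter) => a.1 q).
Definition witness_N : dfa witness_letter n.+2 :=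
  DFA ord0 [set ord0] (fun p (a : witness_letter) => a.2 p).

Definition witness_lang :=
  lang_inter (lang_rev (dfa_lang witness_M)) (dfa_lang witness_N).

(* The letter reaching the state [t]: in M^R the states of [X] become
   accepting (through [ord0]) and the others rejecting (through [ord_max]). *)
Definition reach_letter (t : revI_state m.+2 n.+2) : witness_letter :=
  if t is Some (X, p) then ([ffun q => if q \in val X then ord0 else ord_max], [ffun=> p])
  else ([ffun=> ord_max], [ffun=> ord0]).

(* The suffix accepting exactly from the states [Some (X, p')] with [q \in X]. *)
Definition test_letter (q : 'I_m.+2) (p' : 'I_n.+2) : witness_letter :=
  ([ffun=> q], [ffun p => if p == p' then ord0 else ord_max]).

Lemma witness_lang_reach_test t q p' :
  witness_lang [:: reach_letter t; test_letter q p'] =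
  if t is Some (X, p) then (q \in val X) && (p == p') else false.
Proof.
case: t => [[X p]|];
  rewrite /witness_lang /lang_inter /lang_rev /dfa_lang /dfa_accepts /dfa_run /=;
  rewrite !inE !ffunE //=.
by case: (q \in val X); case: (p == p').
Qed.

Lemma reach_letter_distinguishable t1 t2 :
  (forall v, witness_lang ([:: reach_letter t1] ++ v) =
             witness_lang ([:: reach_letter t2] ++ v)) -> t1 = t2.
Proof.
move=> eqL.
have {}eqL (q : 'I_m.+2) (p' : 'I_n.+2) :
    (if t1 is Some (X, p) then (q \in val X) && (p == p') else false) =
    (if t2 is Some (X, p) then (q \in val X) && (p == p') else false).
  by rewrite -!witness_lang_reach_test; apply: eqL.
have elem (X : {X : {set 'I_m.+2} | X != set0}) : exists q, q \in val X.
  by case: X => X /= /set0Pn.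
case: t1 eqL => [[X p]|]; case: t2 => [[Y p']|] // eqL.
- have [q Xq] := elem X.
  have := eqL q p; rewrite Xq eqxx => /esym/andP[_ /eqP p'p]; subst p'.
  congr (Some (_, _)); apply/val_inj/setP => r.
  by have := eqL r p; rewrite !eqxx !andbT.
- by have [q Xq] := elem X; have := eqL q p; rewrite Xq eqxx.
- by have [q Yq] := elem Y; have := eqL q p'; rewrite Yq eqxx.
Qed.

Lemma witness_state_complexity :
  state_complexity_is witness_lang (2 ^ m.+2 * n.+2 - n.+2 + 1).
Proof.
rewrite -card_revI_state; split.
  by exists (revI_dfa witness_M witness_N); apply: revI_dfa_recognizes.
move=> k D; apply: (recognizes_card_ge (word := fun t => [:: reach_letter t])).
exact: reach_letter_distinguishable.
Qed.

End Witness.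

Theorem theorem12 (m n : nat) (hm : 2 <= m) (hn : 2 <= n) :
  (forall (A : finType) (M : dfa A m) (N : dfa A n),
     exists k, k <= 2 ^ m * n - n + 1 /\
       exists D : dfa A k,
         recognizes D (lang_inter (lang_rev (dfa_lang M)) (dfa_lang N)))
  /\
  (exists (A : finType) (M : dfa A m) (N : dfa A n),
     state_complexity_is (lang_inter (lang_rev (dfa_lang M)) (dfa_lang N))
                         (2 ^ m * n - n + 1)).
Proof.
split.
  move=> A M N; exists #|revI_state m n|; split; first by rewrite card_revI_state.
  by exists (revI_dfa M N); apply: revI_dfa_recognizes.
case: m hm => [|[|m]] // _; case: n hn => [|[|n]] // _.
by exists (witness_letter m n), (witness_M m n), (witness_N m n);
  apply: witness_state_complexity.
Qed.
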